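(* Let $G$ be a profinite group and $k$ an algebraically closed field (with the discrete topology). Let $V$ and $W$ be irreducible smooth representations of $G$ over $k$ and $\chi$ a one-dimensional smooth character of $G$ over $k$. Then $\chi^{\oplus2}$ is not a subrepresentation of $V\otimes W$. *)

From HB Require Import structures.
From mathcomp Require Import all_boot all_order all_algebra.
From mathcomp Require Import boolp classical_sets topology.

Set Implicit Arguments.
Unset Strict Implicit.
Unset Printing Implicit Defensive.

Import Order.TTheory GRing.Theory.
Local Open Scope classical_set_scope.
Local Open Scope ring_scope.

Record profiniteGroup := ProfiniteGroup {
  pg_sort :> topologicalType;
  pg_mul : pg_sort -> pg_sort -> pg_sort;
  pg_inv : pg_sort -> pg_sort;
  pg_one : pg_sort;
  pg_mulA : forall x y z, pg_mul x (pg_mul y z) = pg_mul (pg_mul x y) z;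
  pg_mul1g : forall x, pg_mul pg_one x = x;
  pg_mulg1 : forall x, pg_mul x pg_one = x;
  pg_mulVg : forall x, pg_mul (pg_inv x) x = pg_one;
  pg_mulgV : forall x, pg_mul x (pg_inv x) = pg_one;
  pg_mul_cont : continuous (fun p : pg_sort * pg_sort => pg_mul p.1 p.2);
  pg_inv_cont : continuous pg_inv;
  pg_compact : compact [set: pg_sort];
  pg_hausdorff : hausdorff_space pg_sort;
  pg_totally_disconnected : totally_disconnected [set: pg_sort]
}.

Section Reps.
Variables (G : profiniteGroup) (k : fieldType).

Definition is_rep (V : lmodType k) (rho : G -> V -> V) : Prop :=
  [/\ (forall g (a : k) (u v : V), rho g (a *: u + v) = a *: rho g u + rho g v),
      (forall v, rho (pg_one G) v = v) &
      (forall g h v, rho (pg_mul g h) v = rho g (rho h v))].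

Definition is_smooth_rep (V : lmodType k) (rho : G -> V -> V) : Prop :=
  is_rep rho /\ forall v : V, open [set g : G | rho g v = v].

Definition is_subspace (V : lmodType k) (S : set V) : Prop :=
  S 0 /\ forall (a : k) u v, S u -> S v -> S (a *: u + v).

Definition irreducible_rep (V : lmodType k) (rho : G -> V -> V) : Prop :=
  (exists v : V, v != 0) /\
  forall S : set V, is_subspace S -> (forall g v, S v -> S (rho g v)) ->
    S = [set 0] \/ S = [set: V].

(* One-dimensional smooth character: a homomorphism G -> k^x with open kernel
   (i.e. the smooth representation g |-> multiplication by chi g on k). *)
Definition is_smooth_char (chi : G -> k) : Prop :=
  [/\ chi (pg_one G) = 1,
      (forall g h, chi (pg_mul g h) = chi g * chi h) &
      open [set g : G | chi g = 1]].

(* An element of V (x)_k W is written as a formal finite sum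
   \sum_i v_i (x) w_i, encoded by the list of pairs (v_i, w_i).
   Two formal sums denote the same tensor iff every k-bilinear form
   V x W -> k takes the same value on them
   (V (x) W embeds into the dual of Bil(V,W), the dual space of V (x) W). *)
Definition bilinear_form (V W : lmodType k) (B : V -> W -> k) : Prop :=
  (forall (a : k) v v' w, B (a *: v + v') w = a * B v w + B v' w) /\
  (forall (a : k) v w w', B v (a *: w + w') = a * B v w + B v w').

Definition tensor (V W : lmodType k) := seq (V * W).

Definition tensor_eval (V W : lmodType k) (B : V -> W -> k) (t : tensor V W) : k :=
  \sum_(p <- t) B p.1 p.2.

Definition tensor_eq (V W : lmodType k) (t t' : tensor V W) : Prop :=
  forall B : V -> W -> k, bilinear_form B -> tensor_eval B t = tensor_eval B t'.

Definition tensor_zero (V W : lmodType k) : tensor V W := [::].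
Definition tensor_add (V W : lmodType k) (t t' : tensor V W) : tensor V W := t ++ t'.
Definition tensor_scale (V W : lmodType k) (a : k) (t : tensor V W) : tensor V W :=
  map (fun p => (a *: p.1, p.2)) t.

Definition tensor_act (V W : lmodType k) (rhoV : G -> V -> V) (rhoW : G -> W -> W)
  (g : G) (t : tensor V W) : tensor V W :=
  map (fun p => (rhoV g p.1, rhoW g p.2)) t.

(* chi^{(+)2} is a subrepresentation of V (x) W : there is an injective
   G-equivariant linear map chi (+) chi -> V (x) W, i.e. two linearly
   independent tensors t1, t2 (the images of the standard basis) on which
   G acts through chi. *)
Definition char_twice_in_tensor (V W : lmodType k) (rhoV : G -> V -> V)
  (rhoW : G -> W -> W) (chi : G -> k) : Prop :=
  exists t1 t2 : tensor V W,
    [/\ forall g, tensor_eq (tensor_act rhoV rhoW g t1) (tensor_scale (chi g) t1),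
        forall g, tensor_eq (tensor_act rhoV rhoW g t2) (tensor_scale (chi g) t2) &
        forall a b : k,
          tensor_eq (tensor_add (tensor_scale a t1) (tensor_scale b t2)) (tensor_zero V W) ->
          a = 0 /\ b = 0].

End Reps.

(** A smooth irreducible representation of a profinite group is
    finite-dimensional: the stabiliser of a nonzero vector is open, so by
    compactness its orbit is finite, and the orbit spans a nonzero invariant
    subspace.  In bases, a tensor of V ⊗ W becomes an n × m matrix M on which
    g acts by M ↦ A_V(g)^T M A_W(g).  If G acts on M through χ, the row space
    of M is A_W-stable and its column space A_V-stable, so M is zero or
    invertible (Schur).  The χ-isotypic matrices thus form a space of
    matrices whose nonzero members are invertible; over an algebraically
    closed field such a space is at most a line, because M2 - λ M1 is singular
    for an eigenvalue λ of M2 M1^-1. *)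

From HB Require Import structures.
From mathcomp Require Import all_boot all_order all_algebra.
From mathcomp Require Import boolp classical_sets topology.
From mathcomp Require Import finmap.

Set Implicit Arguments.
Unset Strict Implicit.
Unset Printing Implicit Defensive.
Import Order.TTheory GRing.Theory.
Local Open Scope classical_set_scope.
Local Open Scope ring_scope.

Lemma subspace_sum (k : fieldType) (V : lmodType k) (S : set V) I r (P : pred I)
    (c : I -> k) (F : I -> V) :
  is_subspace S -> (forall i, P i -> S (F i)) -> S (\sum_(i <- r | P i) c i *: F i).
Proof.
move=> [S0 S_lin] SF; apply: big_ind => // [u v Su Sv|i /SF SFi].
  by have := S_lin 1 _ _ Su Sv; rewrite scale1r.
by have := S_lin (c i) _ _ SFi S0; rewrite addr0.
Qed.

Lemma scalar_sumZ (k : fieldType) (V : lmodType k) (h : V -> k) I r (P : pred I)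
    (c : I -> k) (F : I -> V) :
  scalar h -> h (\sum_(i <- r | P i) c i *: F i) = \sum_(i <- r | P i) c i * h (F i).
Proof.
move=> h_lin.
pose hL : {scalar V} := HB.pack h (GRing.isLinear.Build k V k^o *%R h h_lin).
have -> : h (\sum_(i <- r | P i) c i *: F i) = hL (\sum_(i <- r | P i) c i *: F i).
  by [].
by rewrite linear_sum; apply: eq_bigr => i _; rewrite linearZ.
Qed.

Lemma linear_row_sum_delta (k : fieldType) (V : lmodType k) n
    (f : {linear 'rV[k]_n -> V}) (x : 'rV[k]_n) :
  f x = \sum_i x 0 i *: f (delta_mx 0 i).
Proof.
by rewrite {1}[x]row_sum_delta linear_sum; apply: eq_bigr => i _; rewrite linearZ.
Qed.

Section LinComb.
Variables (R : pzRingType) (V : lmodType R).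

Definition lincomb (s : seq V) : 'rV[R]_(size s) -> V := fun x => \sum_j x 0 j *: s`_j.

Lemma lincomb_is_linear s : linear (@lincomb s).
Proof.
move=> a x y; rewrite /lincomb scaler_sumr -big_split; apply: eq_bigr => j _.
by rewrite !mxE scalerDl scalerA.
Qed.

End LinComb.

Arguments lincomb {R V} s.

HB.instance Definition _ (R : pzRingType) (V : lmodType R) (s : seq V) :=
  GRing.isLinear.Build R 'rV[R]_(size s) V *:%R (lincomb s) (@lincomb_is_linear R V s).

Section Span.
Variables (k : fieldType) (V : lmodType k).

Definition lspan (s : seq V) : set V := range (lincomb s).

Definition lin_indep (s : seq V) := forall x, lincomb s x = 0 -> x = 0.

Lemma lspan_subspace s : is_subspace (lspan s).
Proof.
split; first by exists 0; rewrite ?linear0.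
by move=> a _ _ [x _ <-] [y _ <-]; exists (a *: x + y); rewrite ?linearP.
Qed.

Lemma lincomb_delta (s : seq V) (i : 'I_(size s)) : lincomb s (delta_mx 0 i) = s`_i.
Proof.
rewrite /lincomb (bigD1 i) //= big1 ?addr0 => [|j /negbTE nji].
  by rewrite mxE !eqxx scale1r.
by rewrite mxE nji andbF scale0r.
Qed.

Lemma mem_lspan (s : seq V) v : v \in s -> lspan s v.
Proof.
move=> sv; exists (delta_mx 0 (Ordinal (etrans (index_mem v s) sv))) => //.
by rewrite lincomb_delta nth_index.
Qed.

Lemma lincomb_cons (a : V) s (x : 'rV_(size s).+1) :
  lincomb (a :: s) x = x 0 0 *: a + lincomb s (\row_j x 0 (lift 0 j)).
Proof.
by rewrite /lincomb big_ord_recl; congr (_ + _); apply: eq_bigr => j _; rewrite mxE.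
Qed.

Lemma sub_lspan_cons (a : V) s : lspan s `<=` lspan (a :: s).
Proof.
move=> _ [y _ <-]; exists (\row_j oapp (y 0) 0 (unlift 0 j)) => //.
rewrite lincomb_cons mxE unlift_none scale0r add0r; congr lincomb.
by apply/rowP => j; rewrite !mxE liftK.
Qed.

Lemma exists_lin_indep_lspan (s : seq V) :
  exists2 e, lin_indep e & lspan s `<=` lspan e.
Proof.
elim: s => [|a s [e indep_e sub_se]].
  by exists [::] => // x _; apply: thinmx0.
have [[_ Se_lin] [_ Sae_lin]] := (lspan_subspace e, lspan_subspace (a :: e)).
have span_as x : lspan (a :: s) x -> exists c u, x = c *: a + u /\ lspan e u.
  move=> [y _ <-]; rewrite lincomb_cons.
  by eexists; eexists; split; last apply/sub_se/imageT.
have [ea|a_notin_e] := pselect (lspan e a).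
  by exists e => // _ /span_as [c [u [-> eu]]]; apply: Se_lin.
exists (a :: e) => [x|_ /span_as [c [u [-> eu]]]]; last first.
  by apply: Sae_lin; [apply: mem_lspan; rewrite mem_head | apply: sub_lspan_cons].
rewrite lincomb_cons => x0.
have x00 : x 0 0 = 0.
  apply: contra_notP a_notin_e => /eqP nz.
  exists (- (x 0 0)^-1 *: \row_j x 0 (lift 0 j)) => //.
  rewrite linearZ /= -[lincomb _ _](addKr (x 0 0 *: a)) x0 addr0.
  by rewrite scaleNr scalerN opprK scalerA mulVf ?scale1r.
have /indep_e y0 : lincomb e (\row_j x 0 (lift 0 j)) = 0.
  by rewrite -x0 x00 scale0r add0r.
apply/rowP => j; rewrite mxE; case: (unliftP 0 j) => [j' ->|->] //.
by have := congr1 (fun y : 'rV_(size e) => y 0 j') y0; rewrite !mxE.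
Qed.

Lemma lspan_coordinates (s : seq V) : lspan s = setT ->
  exists n (phi : {linear 'rV[k]_n -> V}) (psi : {linear V -> 'rV[k]_n}),
    cancel phi psi /\ cancel psi phi.
Proof.
move=> span_sT; have [e indep_e sub_se] := exists_lin_indep_lspan s.
have surj v : exists x, lincomb e x = v.
  have /sub_se [x _ <-] : lspan s v by rewrite span_sT.
  by exists x.
pose psi v := sval (cid (surj v)).
have psiK : cancel psi (lincomb e) by move=> v; exact: svalP (cid (surj v)).
have phiK : cancel (lincomb e) psi.
  move=> x; apply/eqP; rewrite -subr_eq0; apply/eqP/indep_e.
  by rewrite linearB /= psiK subrr.
pose psiL : {linear V -> 'rV[k]_(size e)} :=
  HB.pack psi (GRing.isLinear.Build k V _ *:%R psi (can2_linear phiK psiK)).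
by exists (size e), (lincomb e : {linear _ -> V}), psiL.
Qed.
End Span.

Section ProfiniteGroup.
Variable G : profiniteGroup.

Lemma pg_mulKg (g x : G) : pg_mul g (pg_mul (pg_inv g) x) = x.
Proof. by rewrite pg_mulA pg_mulgV pg_mul1g. Qed.

Lemma pg_mul_continuous (g : G) : continuous (pg_mul g).
Proof.
move=> x; have pair_cont : {for x, continuous (fun y : G => (g, y))}.
  by apply: cvg_pair; [exact: cvg_cst | exact: cvg_id].
exact: (continuous_comp pair_cont (@pg_mul_cont G (g, x))).
Qed.

(* [compact_cover] is stated for pointed spaces: point G at its unit. *)
Lemma pg_cover_compact : cover_compact [set: G].
Proof.
pose pG := HB.pack_for ptopologicalType (pg_sort G) (isPointed.Build _ (pg_one G)).
have : @compact pG [set: pG] := @pg_compact G.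
by rewrite compact_cover.
Qed.
End ProfiniteGroup.

Definition irreducible_mxrep (G : profiniteGroup) (k : fieldType) n
    (A : G -> 'M[k]_n) :=
  forall p (U : 'M_(p, n)), (forall g, (U *m A g <= U)%MS) -> U = 0 \/ row_full U.

Section Representation.
Variables (G : profiniteGroup) (k : fieldType) (V : lmodType k) (rho : G -> V -> V).
Hypothesis rep_rho : is_rep rho.

Let rho_linear g : linear (rho g).
Proof. by case: rep_rho => rho_lin _ _ a u v; apply: rho_lin. Qed.

HB.instance Definition _ g := GRing.isLinear.Build k V V *:%R (rho g) (rho_linear g).

Lemma smooth_orbit_finite : (forall v, open [set g | rho g v = v]) ->
  forall v, exists gs : seq G, forall g, exists2 h, h \in gs & rho g v = rho h v.
Proof.
have [_ rho1 rhoM] := rep_rho; move=> open_stab v.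
pose fiber g := [set x : G | rho x v = rho g v].
have fiberE g : fiber g = pg_mul (pg_inv g) @^-1` [set x | rho x v = v].
  apply/seteqP; split=> x; rewrite /fiber /preimage /= rhoM.
    by move=> ->; rewrite -rhoM pg_mulVg rho1.
  by move=> e; rewrite -(pg_mulKg g x) !rhoM e.
have open_fiber g : [set: G] g -> open (fiber g).
  by move=> _; rewrite fiberE; apply: open_comp => // x _; exact: pg_mul_continuous.
have [|D _ cover_D] := @pg_cover_compact G G _ _ open_fiber.
  by move=> g _; exists g.
by exists (enum_fset D) => g; have [h Dh gh] := cover_D g I; exists h.
Qed.

Lemma smooth_irreducible_spanned : (forall v, open [set g | rho g v = v]) ->
  irreducible_rep rho -> exists s : seq V, lspan s = setT.
Proof.
have [_ rho1 rhoM] := rep_rho; move=> open_stab [[v nz_v] irr].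
have [gs orbit_gs] := smooth_orbit_finite open_stab v.
pose s := [seq rho h v | h <- gs]; exists s.
have orbit_s g : lspan s (rho g v).
  by have [h gs_h ->] := orbit_gs g; apply/mem_lspan/map_f.
have span_stable g u : lspan s u -> lspan s (rho g u).
  move=> [x _ <-]; rewrite linear_sum.
  under eq_bigr do rewrite linearZ.
  apply: subspace_sum (lspan_subspace s) _ => j _.
  rewrite (nth_map (pg_one G)) /= -?rhoM ?orbit_s //.
  by rewrite -(size_map (rho^~ v)).
have [S0|//] := irr _ (lspan_subspace s) span_stable.
by move: (orbit_s (pg_one G)); rewrite rho1 S0 => /eqP; rewrite (negbTE nz_v).
Qed.

Lemma smooth_irreducible_coordinates : (forall v, open [set g | rho g v = v]) ->
  irreducible_rep rho ->
  exists n (phi : {linear 'rV[k]_n -> V}) (psi : {linear V -> 'rV[k]_n}),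
    cancel phi psi /\ cancel psi phi.
Proof.
move=> open_stab irr; have [s span_s] := smooth_irreducible_spanned open_stab irr.
exact: lspan_coordinates span_s.
Qed.

Section Coordinates.
Variables (n : nat) (phi : {linear 'rV[k]_n -> V}) (psi : {linear V -> 'rV[k]_n}).
Hypotheses (phiK : cancel phi psi) (psiK : cancel psi phi).

Definition rep_mx g := lin1_mx (psi \o rho g \o phi).

Lemma mul_rep_mx g x : x *m rep_mx g = psi (rho g (phi x)).
Proof. by rewrite mul_rV_lin1. Qed.

Lemma psi_rho g v : psi (rho g v) = psi v *m rep_mx g.
Proof. by rewrite mul_rep_mx psiK. Qed.

Lemma rep_mx_mulV g : rep_mx g *m rep_mx (pg_inv g) = 1%:M.
Proof.
have [_ rho1 rhoM] := rep_rho; apply/eqP/mulmxP => x.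
by rewrite mulmxA !mul_rep_mx psiK -rhoM pg_mulVg rho1 phiK mulmx1.
Qed.

Lemma rep_mx_irreducible : irreducible_rep rho -> irreducible_mxrep rep_mx.
Proof.
move=> [_ irr] p U U_stable; pose S := [set v | (psi v <= U)%MS].
have S_subspace : is_subspace S.
  split=> [|a u v Su Sv]; first by rewrite /S /= linear0 sub0mx.
  by rewrite /S /= linearP addmx_sub ?scalemx_sub.
have S_stable g v : S v -> S (rho g v).
  by rewrite /S /= psi_rho => Sv; apply: submx_trans (submxMr _ Sv) (U_stable g).
have [S0|ST] := irr S S_subspace S_stable; [left|right].
  apply/row_matrixP => i; rewrite row0 -[row i U]phiK.
  have : S (phi (row i U)) by rewrite /S /= phiK row_sub.
  by rewrite S0 => ->; rewrite linear0.
rewrite -sub1mx; apply/row_subP => j; rewrite row1 -[delta_mx 0 j]phiK.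
by have : S (phi (delta_mx 0 j)) by rewrite ST.
Qed.
End Coordinates.
End Representation.

Section Isotypic.
Variables (G : profiniteGroup) (k : fieldType) (n m : nat).
Variables (AV : G -> 'M[k]_n) (AW : G -> 'M[k]_m) (chi : G -> k).

(* [M] stands for the coordinate matrix of a tensor, on which [g] acts by
   [M |-> (AV g)^T M (AW g)]. *)
Definition isotypic_mx : set 'M[k]_(n, m) :=
  [set M | forall g, (AV g)^T *m M *m AW g = chi g *: M].

Lemma isotypic_mx_subspace : is_subspace isotypic_mx.
Proof.
split=> [g|a M N isoM isoN g]; first by rewrite mulmx0 mul0mx scaler0.
by rewrite mulmxDr mulmxDl -scalemxAr -scalemxAl isoM isoN scalerDr !scalerA mulrC.
Qed.

Hypotheses (AV_mulV : forall g, AV g *m AV (pg_inv g) = 1%:M)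
           (AW_mulV : forall g, AW g *m AW (pg_inv g) = 1%:M).
Hypotheses (irrV : irreducible_mxrep AV) (irrW : irreducible_mxrep AW).

Lemma isotypic_mx_regular M : isotypic_mx M -> M != 0 -> row_free M && row_full M.
Proof.
move=> isoM nz_M.
have stable_rows g : (M *m AW g <= M)%MS.
  have -> : M *m AW g = chi g *: ((AV (pg_inv g))^T *m M).
    by rewrite scalemxAr -isoM !mulmxA -trmx_mul AV_mulV trmx1 mul1mx.
  by rewrite scalemx_sub ?submxMl.
have stable_cols g : (M^T *m AV g <= M^T)%MS.
  have -> : M^T *m AV g = chi g *: ((AW (pg_inv g))^T *m M^T).
    rewrite scalemxAr -linearZ /= -isoM !trmx_mul trmxK !mulmxA -trmx_mul.
    by rewrite AW_mulV trmx1 mul1mx.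
  by rewrite scalemx_sub ?submxMl.
have [/eqP|full_M] := irrW stable_rows; first by rewrite (negbTE nz_M).
have [/eqP|full_MT] := irrV stable_cols; first by rewrite trmx_eq0 (negbTE nz_M).
by rewrite /row_free -mxrank_tr -/(row_full M^T) full_MT full_M.
Qed.
End Isotypic.

Lemma exists_eigenvalue (k : closedFieldType) n (P : 'M[k]_n.+1) :
  exists l, eigenvalue P l.
Proof.
have [l root_l] : exists l, root (char_poly P) l.
  by apply/closed_rootP; rewrite size_char_poly.
by exists l; rewrite eigenvalue_root_char.
Qed.

Lemma regular_mx_subspace_collinear (k : closedFieldType) n m (S : set 'M[k]_(n, m)) :
  is_subspace S -> (forall M, S M -> M != 0 -> row_free M && row_full M) ->
  forall M1 M2, S M1 -> S M2 -> M1 != 0 -> exists l, M2 = l *: M1.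
Proof.
move=> [_ S_lin] S_regular M1 M2 S_M1 S_M2 nz_M1.
have /andP[_ full_M1] := S_regular _ S_M1 nz_M1.
case: n => [|n] in S S_lin S_regular M1 M2 S_M1 S_M2 nz_M1 full_M1 *.
  by rewrite flatmx0 eqxx in nz_M1.
pose P := M2 *m pinvmx M1.
have PM1 : P *m M1 = M2 by rewrite mulmxKpV ?submx_full.
have [l /eigenvalueP[v vP nz_v]] := exists_eigenvalue P.
exists l; apply/eqP; rewrite -subr_eq0; apply/eqP.
have S_Q : S (M2 - l *: M1) by rewrite addrC -scaleNr; apply: S_lin.
apply: contraTeq nz_v => nz_Q.
have /andP[free_Q _] := S_regular _ S_Q nz_Q.
rewrite -(mulmx_free_eq0 _ free_Q) mulmxBr -PM1 mulmxA vP.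
by rewrite -scalemxAl -scalemxAr subrr eqxx.
Qed.

Section TensorMatrix.
Variables (G : profiniteGroup) (k : fieldType) (V W : lmodType k).
Variables (rhoV : G -> V -> V) (rhoW : G -> W -> W).
Hypotheses (repV : is_rep rhoV) (repW : is_rep rhoW).
Variables (n m : nat) (phiV : {linear 'rV[k]_n -> V}) (psiV : {linear V -> 'rV[k]_n}).
Variables (phiW : {linear 'rV[k]_m -> W}) (psiW : {linear W -> 'rV[k]_m}).
Hypotheses (psiVK : cancel psiV phiV) (psiWK : cancel psiW phiW).

Definition tensor_mx (t : tensor V W) : 'M[k]_(n, m) :=
  \sum_(p <- t) (psiV p.1)^T *m psiW p.2.

Lemma tensor_mx_entry t i j :
  tensor_mx t i j = \sum_(p <- t) psiV p.1 0 i * psiW p.2 0 j.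
Proof. by rewrite summxE; apply: eq_bigr => p _; rewrite !mxE big_ord1 !mxE. Qed.

Lemma tensor_eval_mx B t : bilinear_form B ->
  tensor_eval B t =
    \sum_i \sum_j tensor_mx t i j * B (phiV (delta_mx 0 i)) (phiW (delta_mx 0 j)).
Proof.
move=> [Bl Br].
have expand v w : B v w = \sum_i \sum_j
    psiV v 0 i * psiW w 0 j * B (phiV (delta_mx 0 i)) (phiW (delta_mx 0 j)).
  rewrite -{1}(psiVK v) -{1}(psiWK w) (linear_row_sum_delta phiV).
  rewrite (scalar_sumZ (h := B^~ _)) => [|a x y]; last exact: Bl.
  apply: eq_bigr => i _; rewrite (linear_row_sum_delta phiW).
  rewrite (scalar_sumZ (h := B _)) => [|a x y]; last exact: Br.
  by rewrite mulr_sumr; apply: eq_bigr => j _; rewrite mulrA.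
rewrite /tensor_eval; under eq_bigr do rewrite expand.
rewrite exchange_big; apply: eq_bigr => i _.
rewrite exchange_big; apply: eq_bigr => j _.
by rewrite tensor_mx_entry mulr_suml.
Qed.

Lemma tensor_eqP t t' : tensor_eq t t' <-> tensor_mx t = tensor_mx t'.
Proof.
split=> [eq_tt'|eq_mx B B_bil]; last by rewrite !tensor_eval_mx // eq_mx.
apply/matrixP => i j; rewrite !tensor_mx_entry.
apply: (eq_tt' (fun v w => psiV v 0 i * psiW w 0 j)).
split=> a u v w /=; rewrite linearP !mxE; first by rewrite mulrDl mulrA.
by rewrite mulrDr mulrCA.
Qed.

Lemma tensor_mx_act g t :
  tensor_mx (tensor_act rhoV rhoW g t) =
    (rep_mx rhoV phiV psiV g)^T *m tensor_mx t *m rep_mx rhoW phiW psiW g.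
Proof.
rewrite /tensor_mx big_map mulmx_sumr mulmx_suml; apply: eq_bigr => p _ /=.
by rewrite (psi_rho repV psiVK) (psi_rho repW psiWK) trmx_mul !mulmxA.
Qed.

Lemma tensor_mx_scale a t : tensor_mx (tensor_scale a t) = a *: tensor_mx t.
Proof.
rewrite /tensor_mx big_map scaler_sumr; apply: eq_bigr => p _ /=.
by rewrite linearZ /= linearZ /= scalemxAl.
Qed.

Lemma tensor_mx_add t t' : tensor_mx (tensor_add t t') = tensor_mx t + tensor_mx t'.
Proof. exact: big_cat. Qed.

Lemma char_tensor_isotypic chi t :
  (forall g, tensor_eq (tensor_act rhoV rhoW g t) (tensor_scale (chi g) t)) ->
  isotypic_mx (rep_mx rhoV phiV psiV) (rep_mx rhoW phiW psiW) chi (tensor_mx t).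
Proof.
by move=> t_chi g; rewrite -tensor_mx_act -tensor_mx_scale; apply/tensor_eqP.
Qed.
End TensorMatrix.

Theorem mainTheorem14 (G : profiniteGroup) (k : closedFieldType)
  (V : lmodType k) (rhoV : G -> V -> V)
  (W : lmodType k) (rhoW : G -> W -> W)
  (chi : G -> k)
  (hV : is_smooth_rep rhoV) (irrV : irreducible_rep rhoV)
  (hW : is_smooth_rep rhoW) (irrW : irreducible_rep rhoW)
  (hchi : is_smooth_char chi) :
  ~ char_twice_in_tensor rhoV rhoW chi.
Proof.
move=> [t1 [t2 [t1_chi t2_chi indep]]].
have [[repV openV] [repW openW]] := (hV, hW).
have [n [phiV [psiV [phiVK psiVK]]]] := smooth_irreducible_coordinates repV openV irrV.
have [m [phiW [psiW [phiWK psiWK]]]] := smooth_irreducible_coordinates repW openW irrW.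
pose tmx := tensor_mx psiV psiW.
have indep_mx a b : a *: tmx t1 + b *: tmx t2 = 0 -> a = 0 /\ b = 0.
  move=> ab0; apply/indep/(tensor_eqP psiVK psiWK).
  by rewrite tensor_mx_add !tensor_mx_scale ab0 [RHS]big_nil.
have nz_t1 : tmx t1 != 0.
  apply: contra_neq (@oner_neq0 k) => t1_0.
  have /indep_mx[] : 1 *: tmx t1 + 0 *: tmx t2 = 0.
    by rewrite t1_0 scaler0 scale0r addr0.
  by [].
have iso_regular := isotypic_mx_regular (chi := chi)
  (rep_mx_mulV repV phiVK psiVK) (rep_mx_mulV repW phiWK psiWK)
  (rep_mx_irreducible repV phiVK psiVK irrV) (rep_mx_irreducible repW phiWK psiWK irrW).
have [l t2_l] := regular_mx_subspace_collinear (isotypic_mx_subspace _ _ chi)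
  iso_regular (char_tensor_isotypic repV repW psiVK psiWK t1_chi)
  (char_tensor_isotypic repV repW psiVK psiWK t2_chi) nz_t1.
have /indep_mx[_ /eqP] : - l *: tmx t1 + 1 *: tmx t2 = 0.
  by rewrite /tmx t2_l scale1r scaleNr addNr.
by rewrite oner_eq0.
Qed.
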